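(* Let $p_1\equiv p_2\equiv1\pmod4$ be primes and let $\varepsilon_{p_1p_2}=a+b\sqrt{p_1p_2}$ be the fundamental unit of $\mathbb{Q}(\sqrt{p_1p_2})$. If $N(\varepsilon_{p_1p_2})=1$, then neither $a+1$ nor $a-1$ is a perfect square in $\mathbb{N}$.
   Context: $a,b$ are integers or half-integers; $N$ denotes the norm from $\mathbb{Q}(\sqrt{p_1p_2})$ to $\mathbb{Q}$. *)

From Stdlib Require Import Reals ZArith Znumtheory.
Open Scope R_scope.

(* For a squarefree d ≡ 1 (mod 4), the ring of integers of Q(sqrt d) is
   Z[(1+sqrt d)/2] = { a + b sqrt d | a, b both integers or both half-integers }.
   We represent a + b*sqrt d by the pair of reals (a, b). *)
Definition OK_elem (d : Z) (a b : R) : Prop :=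
  exists x y : Z, a = IZR x / 2 /\ b = IZR y / 2 /\ Z.even x = Z.even y.

Definition normQ (d : Z) (a b : R) : R := a ^ 2 - IZR d * b ^ 2.

Definition OK_unit (d : Z) (a b : R) : Prop :=
  OK_elem d a b /\ (normQ d a b = 1 \/ normQ d a b = -1).

Definition fundamental_unit (d : Z) (a b : R) : Prop :=
  OK_unit d a b /\ 1 < a + b * sqrt (IZR d) /\
  forall a' b' : R, OK_unit d a' b' -> 1 < a' + b' * sqrt (IZR d) ->
    a + b * sqrt (IZR d) <= a' + b' * sqrt (IZR d).

From Stdlib Require Import Reals ZArith Znumtheory Lia Lra.

(* Neither the primes nor minimality of the unit matter: it suffices that
   d = p1 p2 is 1 mod 4 and that the unit is nontrivial.  If a = N^2 + s with
   s = +-1, then a is an integer, hence so is b, and d b^2 = a^2 - 1 = N^2 (N^2 + 2s).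
   For N odd the right-hand side is 3 mod 4, while d b^2 is 0 or 1 mod 4.  For
   N = 2k it equals 2 (2k^2 + s) (2k)^2, an odd number times twice a square,
   whereas d b^2 is an odd number times a square: comparing 2-adic valuations
   forces b = 0, which would make the unit equal to 1. *)

Lemma even_of_odd_mul_sq (u s : Z) :
  Z.odd u = true -> Z.even (u * (s * s)) = true -> Z.even s = true.
Proof.
  intros Hu Heven.
  rewrite !Z.even_mul, <- Z.negb_odd, Hu, Bool.orb_diag in Heven.
  exact Heven.
Qed.

Lemma odd_mul_sq_eq_twice_odd_mul_sq (u v : Z) :
  Z.odd u = true -> Z.odd v = true ->
  forall s t, u * (s * s) = 2 * v * (t * t) -> s = 0.
Proof.
  intros Hu Hv s; remember (Z.abs_nat s) as n eqn:Hn; revert s Hn.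
  induction n as [n IH] using lt_wf_ind; intros s Hn t E.
  destruct (Z.eq_dec s 0) as [|Hs]; [assumption|].
  assert (Hs2 : Z.even s = true).
  { apply (even_of_odd_mul_sq u); trivial.
    rewrite E, <- Z.mul_assoc, Z.even_mul; reflexivity. }
  apply Z.even_spec in Hs2; destruct Hs2 as [s' ->].
  assert (Ht2 : Z.even t = true).
  { apply (even_of_odd_mul_sq v); trivial.
    replace (v * (t * t)) with (2 * (u * (s' * s'))) by lia.
    rewrite Z.even_mul; reflexivity. }
  apply Z.even_spec in Ht2; destruct Ht2 as [t' ->].
  enough (s' = 0) by lia.
  apply (IH (Z.abs_nat s')) with (t := t'); [lia | reflexivity | lia].
Qed.

Lemma pell_sq_pm1_trivial (d N s B : Z) :
  d mod 4 = 1 -> (s = 1 \/ s = -1) ->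
  (N * N + s) * (N * N + s) - d * (B * B) = 1 -> B = 0.
Proof.
  intros Hd Hs E.
  pose proof (Z.div_mod d 4 ltac:(lia)) as Hq; rewrite Hd in Hq.
  set (q := d / 4) in Hq.
  destruct (Z.Even_or_Odd N) as [[k ->]|[k ->]].
  - apply (odd_mul_sq_eq_twice_odd_mul_sq d (2 * k * k + s)) with (t := 2 * k).
    + rewrite Hq; replace (4 * q + 1)%Z with (1 + 2 * (2 * q))%Z by ring.
      rewrite Z.odd_add_mul_2; reflexivity.
    + rewrite Z.add_comm, <- Z.mul_assoc, Z.odd_add_mul_2; destruct Hs as [-> | ->]; reflexivity.
    + destruct Hs as [-> | ->]; lia.
  - exfalso.
    destruct (Z.Even_or_Odd B) as [[c ->]|[c ->]];
      destruct Hs as [-> | ->]; nia.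
Qed.

Open Scope R_scope.

Lemma OK_elem_imag_int_of_real_int (d : Z) (a b : R) (m : Z) :
  OK_elem d a b -> a = IZR m -> exists B : Z, b = IZR B.
Proof.
  intros [x [y [Ha [Hb Hxy]]]] Ham.
  assert (Hx : x = (2 * m)%Z).
  { apply eq_IZR; rewrite mult_IZR, <- Ham, Ha; simpl; field. }
  assert (Hy : Z.even y = true) by (rewrite <- Hxy, Hx; apply Z.even_mul).
  apply Z.even_spec in Hy; destruct Hy as [B ->].
  exists B; rewrite Hb, mult_IZR; simpl; field.
Qed.

Lemma fundamental_unit_imag_neq0 (d : Z) (a b : R) :
  fundamental_unit d a b -> b <> 0.
Proof.
  intros [[_ Hn] [Hgt _]] ->.
  unfold normQ in Hn; rewrite Rmult_0_l, Rplus_0_r in Hgt.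
  destruct Hn as [Hn | Hn]; nra.
Qed.

Lemma fundamental_unit_norm1_not_sq_pm1 (d : Z) (a b : R) (N s : Z) :
  (d mod 4 = 1)%Z -> (s = 1 \/ s = -1)%Z ->
  fundamental_unit d a b -> normQ d a b = 1 -> a <> IZR (N * N + s).
Proof.
  intros Hd Hs Hf Hn Ha.
  destruct (OK_elem_imag_int_of_real_int d a b _ (proj1 (proj1 Hf)) Ha) as [B HB].
  apply (fundamental_unit_imag_neq0 d a b Hf).
  rewrite HB; apply IZR_eq, (pell_sq_pm1_trivial d N s B Hd Hs), eq_IZR.
  unfold normQ in Hn; rewrite Ha, HB in Hn.
  rewrite minus_IZR, !mult_IZR; simpl; rewrite <- Hn; ring.
Qed.

Theorem lemma14 (p1 p2 : Z) (a b : R) :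
  prime p1 -> prime p2 -> p1 <> p2 ->
  (p1 mod 4 = 1)%Z -> (p2 mod 4 = 1)%Z ->
  fundamental_unit (p1 * p2) a b ->
  normQ (p1 * p2) a b = 1 ->
  ~ (exists n : nat, a + 1 = INR n ^ 2) /\ ~ (exists n : nat, a - 1 = INR n ^ 2).
Proof.
  intros _ _ _ H1 H2 Hf Hn.
  assert (Hd : ((p1 * p2) mod 4 = 1)%Z) by (rewrite Z.mul_mod, H1, H2 by lia; reflexivity).
  assert (Hsq : forall n : nat, INR n ^ 2 = IZR (Z.of_nat n * Z.of_nat n)).
  { intro n; rewrite mult_IZR, <- INR_IZR_INZ; ring. }
  split; intros [n Han].
  - apply (fundamental_unit_norm1_not_sq_pm1 _ a b (Z.of_nat n) (-1) Hd
             (or_intror eq_refl) Hf Hn).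
    rewrite plus_IZR, <- Hsq, <- Han; simpl; ring.
  - apply (fundamental_unit_norm1_not_sq_pm1 _ a b (Z.of_nat n) 1 Hd
             (or_introl eq_refl) Hf Hn).
    rewrite plus_IZR, <- Hsq, <- Han; simpl; ring.
Qed.
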